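(* Let $A$, $B$ be formulas and $\Delta$ a context. If for every irreducible context $\Gamma$, the existence of a focused derivation of $\Gamma\vdash A$ implies the existence of a focused derivation of $\Gamma,\Delta\vdash B$, then $A,\Delta\vdash B$ has a focused derivation. In particular, $A\vdash A$ has a focused derivation for every formula $A$.
   Context: Formulas are built from atoms ($p,q,\dots$) by a binary product: every formula is an atom or $A\bullet B$. A context is a finite (possibly empty) list of formulas; commas denote concatenation. A context is irreducible if its leftmost formula is not a product (it is empty or begins with an atom). A focused derivation of a sequent is a finite derivation tree with no undischarged premises using only the rules: ($\bullet L$): from $A,B,\Delta\vdash C$ infer $A\bullet B,\Delta\vdash C$; ($\bullet R^{foc}$): from $\Gamma\vdash A$ and $\Delta\vdash B$ infer $\Gamma,\Delta\vdash A\bullet B$, where $\Gamma$ is irreducible; and ($id^{atm}$): $p\vdash p$ for atoms $p$. *)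

From Stdlib Require Import List.
Import ListNotations.

Inductive formula : Type :=
| atom : nat -> formula
| prod : formula -> formula -> formula.

(* A context is a finite list of formulas; commas = list concatenation. *)
Definition context := list formula.

Definition irreducible (G : context) : Prop :=
  match G with
  | [] => True
  | atom _ :: _ => True
  | prod _ _ :: _ => False
  end.

Inductive foc : context -> formula -> Prop :=
| foc_prodL : forall A B D C,
    foc (A :: B :: D) C -> foc (prod A B :: D) C
| foc_prodR : forall G D A B,
    irreducible G -> foc G A -> foc D B -> foc (G ++ D) (prod A B)
| foc_id : forall p, foc [atom p] (atom p).

(* Induction on A, generalised to an occurrence of A after an irreducible
   prefix L.  For A = A1 • A2 and L empty, the left rule reduces A1 • A2, D to
   A1, A2, D; the induction hypothesis for A1 replaces A1 by any G1 with
   G1 ⊢ A1, then the one for A2 (with prefix G1) replaces A2 by any G2 with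
   G2 ⊢ A2, and G1, G2 ⊢ A1 • A2 by the focused right rule.  This is why the
   prefix is needed: A2 is no longer leftmost once A1 has been replaced.  For
   L nonempty, L, A1 • A2 is already irreducible, so it is enough to have
   A1 • A2 ⊢ A1 • A2, which is the empty-prefix case with D empty. *)

From Stdlib Require Import List.
Import ListNotations.

Lemma irreducible_app (L G : context) :
  L <> [] -> irreducible L -> irreducible (L ++ G).
Proof.
  destruct L as [|[p|A1 A2] L]; simpl; tauto.
Qed.

Definition expandable (A : formula) : Prop :=
  forall (L D : context) (B : formula),
    irreducible L ->
    (forall G : context, irreducible (L ++ G) -> foc G A -> foc (L ++ G ++ D) B) ->
    foc (L ++ A :: D) B.

Lemma expandable_atom (p : nat) : expandable (atom p).
Proof.
  intros L D B HL H.
  apply (H [atom p]); [| constructor].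
  destruct L as [|C L]; [exact I |].
  apply irreducible_app; [discriminate | exact HL].
Qed.

Lemma foc_prod_head (A1 A2 : formula) (D : context) (B : formula) :
  expandable A1 -> expandable A2 ->
  (forall G : context, irreducible G -> foc G (prod A1 A2) -> foc (G ++ D) B) ->
  foc (prod A1 A2 :: D) B.
Proof.
  intros E1 E2 H.
  apply foc_prodL.
  apply (E1 [] (A2 :: D) B I); simpl.
  intros G1 HG1 F1.
  apply (E2 G1 D B HG1).
  intros G2 HG12 F2.
  rewrite app_assoc.
  apply H; [exact HG12 |].
  apply foc_prodR; assumption.
Qed.

Lemma foc_prod_id (A1 A2 : formula) :
  expandable A1 -> expandable A2 -> foc [prod A1 A2] (prod A1 A2).
Proof.
  intros E1 E2.
  apply foc_prod_head; [exact E1 | exact E2 |].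
  intros G _ F; rewrite app_nil_r; exact F.
Qed.

Lemma expandable_prod (A1 A2 : formula) :
  expandable A1 -> expandable A2 -> expandable (prod A1 A2).
Proof.
  intros E1 E2 [|C L] D B HL H.
  - apply foc_prod_head; [exact E1 | exact E2 | exact H].
  - apply (H [prod A1 A2]).
    + apply irreducible_app; [discriminate | exact HL].
    + exact (foc_prod_id A1 A2 E1 E2).
Qed.

Lemma expandable_all (A : formula) : expandable A.
Proof.
  induction A as [p | A1 E1 A2 E2].
  - apply expandable_atom.
  - apply expandable_prod; assumption.
Qed.

Theorem lemma1p13 :
  (forall (A B : formula) (D : context),
     (forall G : context, irreducible G -> foc G A -> foc (G ++ D) B) ->
     foc (A :: D) B)
  /\ (forall A : formula, foc [A] A).
Proof.
  assert (Hhead : forall (A B : formula) (D : context),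
             (forall G : context, irreducible G -> foc G A -> foc (G ++ D) B) ->
             foc (A :: D) B).
  { intros A B D H. exact (expandable_all A [] D B I H). }
  split; [exact Hhead |].
  intros A; apply Hhead.
  intros G _ F; rewrite app_nil_r; exact F.
Qed.
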